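(* Let $t>0$ and let $X\subseteq Z$ be finite subsets of $\mathbb{R}^D$. Then $\mathrm{Mag}(tZ)=\mathrm{Mag}(tX)$ if and only if $X$ and $Z$ are magnitude-equivalent at scale $t$.
   Context: For a finite set $A\subset\mathbb{R}^D$ and $t>0$, the matrix $\zeta_{tA}(x,y)=\exp(-t\|x-y\|)$ ($x,y\in A$) is invertible; $\mathbf{w}^t_A=\zeta_{tA}^{-1}\mathbb{1}$ is the weighting vector of $A$ at scale $t$ and $\mathrm{Mag}(tA)=\sum_{x\in A}\mathbf{w}^t_A(x)$. Finite $X,Y\subset\mathbb{R}^D$ are magnitude-equivalent at scale $t$ if $\{x\in X:\mathbf{w}^t_X(x)\neq0\}=\{y\in Y:\mathbf{w}^t_Y(y)\neq0\}$. *)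

From HB Require Import structures.
From mathcomp Require Import all_boot all_order all_algebra.
From mathcomp Require Import finmap.
From mathcomp Require Import all_classical all_reals all_analysis.
Set Implicit Arguments. Unset Strict Implicit. Unset Printing Implicit Defensive.
Import Order.TTheory GRing.Theory Num.Theory.
Local Open Scope ring_scope.
Local Open Scope fset_scope.

Section Magnitude.
Variables (R : realType) (D : nat).

Definition pt := 'rV[R]_D.

Definition enorm (x : pt) : R := Num.sqrt (\sum_(i < D) (x 0 i) ^+ 2).
Definition edist (x y : pt) : R := enorm (x - y).

Definition zeta (t : R) (A : {fset pt}) : 'M[R]_(#|{: A}|) :=
  \matrix_(i, j) expR (- (t * edist (val (enum_val i)) (val (enum_val j)))).

Definition weighting (t : R) (A : {fset pt}) : 'cV[R]_(#|{: A}|) :=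
  invmx (zeta t A) *m const_mx 1.

(* w^t_A(x) for x in A (and 0 outside A, never used there). *)
Definition weight (t : R) (A : {fset pt}) (x : pt) : R :=
  match insub x : option A with
  | Some a => weighting t A (enum_rank a) 0
  | None => 0
  end.

Definition Mag (t : R) (A : {fset pt}) : R :=
  \sum_(i < #|{: A}|) weighting t A i 0.

Definition wsupport (t : R) (A : {fset pt}) : {fset pt} :=
  [fset x in A | weight t A x != 0].

Definition mag_equiv (t : R) (X Y : {fset pt}) : Prop :=
  wsupport t X = wsupport t Y.

End Magnitude.

From Pilot Require Import Defs.
From HB Require Import structures.
From mathcomp Require Import all_boot all_order all_algebra.
From mathcomp Require Import finmap.
From mathcomp Require Import all_classical all_reals all_analysis.
From mathcomp.algebra_tactics Require Import ring lra.
Import Order.TTheory GRing.Theory Num.Theory.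
Import numFieldNormedType.Exports.
Local Open Scope ring_scope.
Local Open Scope classical_set_scope.

(* The Laplace kernel exp (- t |x - y|) is strictly positive definite on
   distinct points.  Indeed |x - y| ^ 2 is conditionally negative definite,
   hence so is its square root (by comparison with Gaussian kernels), and
   Schoenberg's construction turns a conditionally negative definite phi into
   the positive semidefinite kernel exp (- phi), which is even definite when
   phi vanishes only on the diagonal.
   Weightings are therefore unique.  Under magnitude equivalence w_Z vanishes
   off X, so it restricts to the weighting of X and Mag (tZ) = Mag (tX).
   Conversely, the energy of w_X - w_Z for the similarity matrix of Z is
   Mag (tZ) - Mag (tX), so equal magnitudes force w_X = w_Z on Z. *)

Section NonnegativeSeries.
Context {R : realType}.

Lemma series_ge0_le_lim {u : R ^nat} {l : R} : (forall n, 0 <= u n) ->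
  series u @ \oo --> l -> forall n, series u n <= l.
Proof.
move=> u_ge0 ul; rewrite -(cvg_lim _ ul) //.
by apply: nondecreasing_cvgn_le; [exact: nondecreasing_series | exact: cvgP ul].
Qed.

Lemma series_ge0_eq0 {u : R ^nat} : (forall n, 0 <= u n) ->
  series u @ \oo --> 0 -> forall n, u n = 0.
Proof.
move=> u_ge0 u0 n; apply/le_anti; rewrite u_ge0 andbT.
have := series_ge0_le_lim u_ge0 u0 n.+1; rewrite seriesSr.
have : 0 <= series u n by apply: sumr_ge0 => p _.
lra.
Qed.

End NonnegativeSeries.

Section QuadraticForms.
Context {R : realType} {I : finType}.
Implicit Types (k l : I -> I -> R) (c d : I -> R).

Definition bform k c d := \sum_i \sum_j c i * d j * k i j.
Definition qform k c := bform k c c.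
Definition psd k := forall c, 0 <= qform k c.
Definition cnd k := forall c, \sum_i c i = 0 -> qform k c <= 0.
Definition delta (i0 : I) : I -> R := fun i => (i == i0)%:R.

Lemma sum_delta i0 (F : I -> R) : \sum_i delta i0 i * F i = F i0.
Proof.
rewrite (bigD1 i0) //= /delta eqxx mul1r big1 ?addr0 // => j /negbTE ->.
by rewrite mul0r.
Qed.

Lemma eq_qform k l c : k =2 l -> qform k c = qform l c.
Proof. by move=> kl; apply: eq_bigr => i _; apply: eq_bigr => j _; rewrite kl. Qed.

Lemma bformC k c d : commutative k -> bform k c d = bform k d c.
Proof.
move=> kC; rewrite /bform exchange_big /=; apply: eq_bigr => i _.
by apply: eq_bigr => j _; rewrite kC; ring.
Qed.

Lemma bform_delta k c j0 : bform k c (delta j0) = \sum_i c i * k i j0.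
Proof.
apply: eq_bigr => i _; rewrite -(sum_delta j0 (fun j => c i * k i j)).
by apply: eq_bigr => j _; ring.
Qed.

Lemma qform_delta k i0 : qform k (delta i0) = k i0 i0.
Proof.
rewrite /qform bform_delta -(sum_delta i0 (fun i => k i i0)).
by apply: eq_bigr => i _; rewrite mulrC.
Qed.

Lemma qform_sum (J : finType) (K : J -> I -> I -> R) c :
  qform (fun i j => \sum_q K q i j) c = \sum_q qform (K q) c.
Proof.
rewrite /qform /bform; under eq_bigr do under eq_bigr do rewrite mulr_sumr.
by under eq_bigr do rewrite exchange_big /=; rewrite exchange_big.
Qed.

Lemma qformD k l c : qform (fun i j => k i j + l i j) c = qform k c + qform l c.
Proof.
rewrite /qform /bform -big_split; apply: eq_bigr => i _.
by rewrite -big_split; apply: eq_bigr => j _ /=; ring.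
Qed.

Lemma qformZ (a : R) k c : qform (fun i j => a * k i j) c = a * qform k c.
Proof.
rewrite /qform /bform mulr_sumr; apply: eq_bigr => i _.
by rewrite mulr_sumr; apply: eq_bigr => j _; ring.
Qed.

Lemma qform_conj (a : I -> R) k c :
  qform (fun i j => a i * a j * k i j) c = qform k (fun i => c i * a i).
Proof. by apply: eq_bigr => i _; apply: eq_bigr => j _; ring. Qed.

Lemma qform_cst (a : R) c : qform (fun _ _ => a) c = a * (\sum_i c i) ^+ 2.
Proof.
rewrite /qform /bform expr2 mulr_suml mulr_sumr; apply: eq_bigr => i _.
by rewrite !mulr_sumr; apply: eq_bigr => j _; ring.
Qed.

Lemma qform_rank1 (a : I -> R) c :
  qform (fun i j => a i * a j) c = (\sum_i c i * a i) ^+ 2.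
Proof.
rewrite (eq_qform _ (fun i j => a i * a j * 1)) => [|i j]; last by rewrite mulr1.
by rewrite qform_conj qform_cst mul1r.
Qed.

Lemma qform_sepD (u : I -> R) c :
  qform (fun i j => u i + u j) c = 2 * (\sum_i c i) * (\sum_i c i * u i).
Proof.
transitivity (\sum_i \sum_j (c i * u i * c j + c i * (c j * u j))).
  by apply: eq_bigr => i _; apply: eq_bigr => j _; ring.
under eq_bigr do rewrite big_split -!mulr_sumr.
by rewrite big_split -!mulr_suml /=; ring.
Qed.

Lemma qform_lin k c d (x : R) : commutative k ->
  qform k (fun i => c i + x * d i) =
  qform k c + 2 * x * bform k c d + x ^+ 2 * qform k d.
Proof.
move=> kC.
have -> : 2 * x * bform k c d = x * bform k d c + x * bform k c d.
  by rewrite (bformC _ _ _ kC); ring.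
rewrite /qform /bform !mulr_sumr -!big_split /=; apply: eq_bigr => i _.
rewrite !mulr_sumr -!big_split /=; apply: eq_bigr => j _; ring.
Qed.

End QuadraticForms.

Section PsdKernels.
Context {R : realType} {I : finType}.
Implicit Types (k l : I -> I -> R) (c d : I -> R).

Lemma psd_diag k i : psd k -> 0 <= k i i.
Proof. by move=> kpsd; rewrite -qform_delta. Qed.

Lemma eq_psd l k : k =2 l -> psd l -> psd k.
Proof. by move=> kl lpsd c; rewrite (eq_qform _ _ _ kl). Qed.

Lemma psdD k l : psd k -> psd l -> psd (fun i j => k i j + l i j).
Proof. by move=> kpsd lpsd c; rewrite qformD addr_ge0. Qed.

Lemma psdZ (a : R) k : 0 <= a -> psd k -> psd (fun i j => a * k i j).
Proof. by move=> a0 kpsd c; rewrite qformZ mulr_ge0. Qed.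

Lemma psd_cst (a : R) : 0 <= a -> psd (fun _ _ : I => a).
Proof. by move=> a0 c; rewrite qform_cst mulr_ge0 ?sqr_ge0. Qed.

Lemma psd_CauchySchwarz k c d : commutative k -> psd k ->
  bform k c d ^+ 2 <= qform k c * qform k d.
Proof.
move=> kC kpsd; set b := bform k c d; set qc := qform k c; set qd := qform k d.
have qlin x : 0 <= qc + 2 * x * b + x ^+ 2 * qd by rewrite -qform_lin.
have [qd_gt0|] := ltP 0 qd.
  have := qlin (- b / qd).
  have -> : qc + 2 * (- b / qd) * b + (- b / qd) ^+ 2 * qd = qc - b ^+ 2 / qd.
    by field; rewrite gt_eqF.
  by rewrite subr_ge0 ler_pdivrMr.
move=> qd_le0; have qd0 : qd = 0 by apply/le_anti; rewrite qd_le0 kpsd.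
have [->|b_neq0] := eqVneq b 0; first by rewrite expr0n /= qd0 mulr0.
have := qlin (- (qc + 1) / (2 * b)).
have -> : qc + 2 * (- (qc + 1) / (2 * b)) * b + (- (qc + 1) / (2 * b)) ^+ 2 * qd
    = -1 by rewrite qd0; field.
by rewrite ler0N1.
Qed.

Lemma psd_diag_eq0 k i j : commutative k -> psd k -> k i i = 0 -> k i j = 0.
Proof.
move=> kC kpsd kii0; apply/eqP; rewrite -sqrf_eq0 eq_le sqr_ge0 andbT.
have := psd_CauchySchwarz k (delta i) (delta j) kC kpsd.
by rewrite bform_delta sum_delta !qform_delta kii0 mul0r.
Qed.

(* The Schur complement of [k i0 i0]. *)
Lemma psd_sub_rank1 k i0 : commutative k -> psd k -> 0 < k i0 i0 ->
  psd (fun i j => k i j - k i i0 * k j i0 / k i0 i0).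
Proof.
move=> kC kpsd a_gt0 c.
have -> : qform (fun i j => k i j - k i i0 * k j i0 / k i0 i0) c =
    qform k c - bform k c (delta i0) ^+ 2 / k i0 i0.
  rewrite bform_delta -qform_rank1 mulrC -mulNr -qformZ -qformD.
  by apply: eq_qform => i j; ring.
rewrite subr_ge0 ler_pdivrMr // -(qform_delta k i0).
exact: psd_CauchySchwarz.
Qed.

Lemma psd_gram k : commutative k -> psd k ->
  exists s : seq (I -> R), forall i j, k i j = \sum_(v <- s) v i * v j.
Proof.
have [n] := ubnP #|[pred i | k i i != 0]|.
elim: n => // n IHn in k *; rewrite ltnS => supp_k kC kpsd.
have [i0 /= ki0_neq0|diag0] := pickP [pred i | k i i != 0]; last first.
  exists [::] => i j; rewrite big_nil; apply: psd_diag_eq0 => //.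
  by apply/eqP; move/negbT: (diag0 i); rewrite negbK.
set a := k i0 i0; have a_gt0 : 0 < a by rewrite lt_def ki0_neq0 psd_diag.
pose k' i j := k i j - k i i0 * k j i0 / a.
have k'C : commutative k' by move=> i j; rewrite /k' kC [k i i0 * _]mulrC.
have supp_k' : [pred i | k' i i != 0] \proper [pred i | k i i != 0].
  apply/properP; split.
    apply/fintype.subsetP => i; rewrite !inE /=; apply: contraNneq => kii0.
    by rewrite /k' (psd_diag_eq0 _ _ i0 kC kpsd kii0) kii0 !mul0r subrr.
  by exists i0; rewrite !inE //= /k' mulfK ?subrr ?eqxx ?gt_eqF.
have k'psd : psd k' := psd_sub_rank1 _ _ kC kpsd a_gt0.
have [s ks] := IHn k' (leq_trans (proper_card supp_k') supp_k) k'C k'psd.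
pose v i := k i i0 / Num.sqrt a.
exists (v :: s) => i j; rewrite big_cons -ks /k' /v mulrACA -invfM -expr2.
by rewrite sqr_sqrtr ?ltW //; ring.
Qed.

Lemma qform_mul_gram k (s : seq (I -> R)) c :
  qform (fun i j => k i j * \sum_(v <- s) v i * v j) c =
  \sum_(v <- s) qform k (fun i => c i * v i).
Proof.
rewrite /qform /bform.
transitivity (\sum_i \sum_j \sum_(v <- s) c i * v i * (c j * v j) * k i j).
  apply: eq_bigr => i _; apply: eq_bigr => j _.
  by rewrite !mulr_sumr; apply: eq_bigr => v _; ring.
by under eq_bigr do rewrite exchange_big /=; rewrite exchange_big.
Qed.

Lemma psdM k l : commutative l -> psd k -> psd l -> psd (fun i j => k i j * l i j).
Proof.
move=> lC kpsd lpsd; have [s ls] := psd_gram _ lC lpsd.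
apply: (eq_psd (fun i j => k i j * \sum_(v <- s) v i * v j)) => [i j|c].
  by rewrite ls.
by rewrite qform_mul_gram sumr_ge0.
Qed.

Lemma psdX k p : commutative k -> psd k -> psd (fun i j => k i j ^+ p).
Proof.
move=> kC kpsd; elim: p => [|p IHp]; first exact: psd_cst.
apply: (eq_psd (fun i j => k i j ^+ p * k i j)) => [i j|]; first by rewrite exprSr.
exact: psdM.
Qed.

End PsdKernels.

Section ExponentialKernels.
Context {R : realType} {I : finType}.
Implicit Types (k : I -> I -> R) (c : I -> R).

Lemma cvg_qform (K : nat -> I -> I -> R) k c :
  (forall i j, K n i j @[n --> \oo] --> k i j) ->
  qform (K n) c @[n --> \oo] --> qform k c.
Proof.
move=> Kk; apply: cvg_big => // [|i _]; first exact: add_continuous.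
apply: cvg_big => // [|j _]; first exact: add_continuous.
by apply: cvgM; [exact: cvg_cst | exact: Kk].
Qed.

Lemma psd_exp_coeff k p : commutative k -> psd k ->
  psd (fun i j => exp_coeff (k i j) p).
Proof.
move=> kC kpsd c; rewrite (eq_qform _ (fun i j => p`!%:R^-1 * k i j ^+ p)) => [|i j].
  by apply: psdZ; [rewrite invr_ge0 | exact: psdX].
by rewrite /exp_coeff /= mulrC.
Qed.

Lemma qform_expR_series k c :
  series (fun p => qform (fun i j => exp_coeff (k i j) p) c) n @[n --> \oo] -->
  qform (fun i j => expR (k i j)) c.
Proof.
have -> : series (fun p => qform (fun i j => exp_coeff (k i j) p) c) =
    (fun n => qform (fun i j => series (exp_coeff (k i j)) n) c).
  apply/funext => n; rewrite /series /= big_mkord -qform_sum.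
  by apply: eq_qform => i j; rewrite big_mkord.
by apply: cvg_qform => i j; exact: is_cvg_series_exp_coeff.
Qed.

Lemma psd_expR k : commutative k -> psd k -> psd (fun i j => expR (k i j)).
Proof.
move=> kC kpsd c; have := series_ge0_le_lim _ (qform_expR_series k c) 0.
by rewrite /series /= big_geq //; apply => p; exact: psd_exp_coeff.
Qed.

Lemma qform_expR_eq0_pows k c : commutative k -> psd k ->
  qform (fun i j => expR (k i j)) c = 0 ->
  forall p, qform (fun i j => k i j ^+ p) c = 0.
Proof.
move=> kC kpsd expk0 p.
have := qform_expR_series k c; rewrite expk0.
move=> /(series_ge0_eq0 (fun q => psd_exp_coeff _ q kC kpsd c))/(_ p).
have -> : qform (fun i j => exp_coeff (k i j) p) c =
    p`!%:R^-1 * qform (fun i j => k i j ^+ p) c.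
  by rewrite -qformZ; apply: eq_qform => i j; rewrite /exp_coeff /= mulrC.
by move/eqP; rewrite mulf_eq0 invr_eq0 pnatr_eq0 gtn_eqF ?fact_gt0 //= => /eqP.
Qed.

Lemma qform_pows_top k c (M : R) : 0 < M ->
  (forall i j, c i != 0 -> c j != 0 -> 0 < k i j <= M) ->
  (forall p, qform (fun i j => k i j ^+ p) c = 0) ->
  qform (fun i j => (k i j == M)%:R) c = 0.
Proof.
move=> M_gt0 k_bound kpow0; pose s j : R := (c j != 0)%:R.
have supp_s k' : qform (fun i j => s i * s j * k' i j) c = qform k' c.
  rewrite qform_conj; congr qform; apply/funext => i.
  by rewrite /s; case: eqVneq => [->|]; rewrite ?mul0r ?mulr1.
have cvg_top : qform (fun i j => s i * s j * (k i j / M) ^+ p) c @[p --> \oo] -->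
    qform (fun i j => s i * s j * (k i j == M)%:R) c.
  apply: cvg_qform => i j; have [ci0|ci] := eqVneq (c i) 0.
    by rewrite /s ci0 eqxx /= !mul0r; under eq_cvg do rewrite !mul0r; exact: cvg_cst.
  have [cj0|cj] := eqVneq (c j) 0.
    rewrite /s cj0 eqxx /= !mulr0 !mul0r.
    by under eq_cvg do rewrite mul0r; exact: cvg_cst.
  apply: cvgM; first exact: cvg_cst.
  have /andP [k_gt0 k_le_M] := k_bound i j ci cj.
  have [->|k_neq_M] := eqVneq (k i j) M.
    by rewrite divff ?gt_eqF //; under eq_cvg do rewrite expr1n; exact: cvg_cst.
  apply: cvg_expr; rewrite ger0_norm ?divr_ge0 ?ltW // ltr_pdivrMr // mul1r.
  by rewrite lt_neqAle k_neq_M.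
have seq0 p : qform (fun i j => s i * s j * (k i j / M) ^+ p) c = 0.
  rewrite supp_s (eq_qform _ (fun i j => M^-1 ^+ p * k i j ^+ p)).
    by rewrite qformZ kpow0 mulr0.
  by move=> i j; rewrite exprMn mulrC.
rewrite -supp_s -(cvg_lim _ cvg_top) //; under eq_fun do rewrite seq0.
exact: lim_cst.
Qed.

(* On the support of [c], [k] is bounded by its largest diagonal entry [M],
   strictly off the diagonal. *)
Lemma qform_pows_eq0 k c : (forall i j, 0 < k i j) ->
  (forall i j, i != j -> 2 * k i j < k i i + k j j) ->
  (forall p, qform (fun i j => k i j ^+ p) c = 0) -> forall i, c i = 0.
Proof.
move=> k_gt0 k_dom kpow0 i; apply/eqP/negPn/negP => ci_neq0.
have [m cm m_max] := @arg_maxP _ _ I i (fun j => c j != 0) (fun j => k j j) ci_neq0.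
set M := k m m in m_max *; have {}m_max j : c j != 0 -> k j j <= M := m_max j.
have k_lt_M j h : c j != 0 -> c h != 0 -> j != h -> k j h < M.
  move=> cj ch jh; have := k_dom j h jh.
  by have := m_max j cj; have := m_max h ch; lra.
have k_le_M j h : c j != 0 -> c h != 0 -> k j h <= M.
  by move=> cj ch; have [<-|jh] := eqVneq j h; [exact: m_max | exact/ltW/k_lt_M].
have k_bound j h : c j != 0 -> c h != 0 -> 0 < k j h <= M.
  by move=> cj ch; rewrite k_gt0 k_le_M.
have := qform_pows_top k c M (k_gt0 m m) k_bound kpow0.
have diag j : \sum_h c j * c h * (k j h == M)%:R = c j ^+ 2 * (k j j == M)%:R.
  rewrite (bigD1 j) //= big1 ?addr0 ?expr2 // => h hj.
  have [->|cj] := eqVneq (c j) 0; first by rewrite !mul0r.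
  have [->|ch] := eqVneq (c h) 0; first by rewrite mulr0 mul0r.
  by rewrite (lt_eqF (k_lt_M _ _ cj ch _)) ?mulr0 // eq_sym.
rewrite /qform /bform (eq_bigr _ (fun j _ => diag j)) (bigD1 m) //= eqxx mulr1.
apply/eqP; rewrite gt_eqF // ltr_wpDr ?exprn_even_gt0 ?cm ?orbT //.
by apply: sumr_ge0 => j _; rewrite mulr_ge0 ?sqr_ge0.
Qed.

(* Adding a constant to [k] rescales [exp k], so we may assume [k > 0]. *)
Lemma qform_expR_eq0 k c : commutative k -> psd k ->
  (forall i j, i != j -> 2 * k i j < k i i + k j j) ->
  qform (fun i j => expR (k i j)) c = 0 -> forall i, c i = 0.
Proof.
move=> kC kpsd k_dom expk0.
pose m := 1 + \sum_i \sum_j `|k i j|.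
have m_ge0 : 0 <= m by rewrite addr_ge0 // sumr_ge0 // => i _; exact: sumr_ge0.
have k_gt0 i j : 0 < k i j + m.
  have : `|k i j| <= \sum_i \sum_j `|k i j|.
    rewrite (bigD1 i) //= (bigD1 j) //= -addrA lerDl addr_ge0 ?sumr_ge0 //.
    by move=> i' _; exact: sumr_ge0.
  by have := ler_norm (- k i j); rewrite normrN /m; lra.
apply: (qform_pows_eq0 (fun i j => k i j + m) c k_gt0) => [i j /k_dom|]; first lra.
apply: qform_expR_eq0_pows; first by move=> i j; rewrite kC.
  exact/psdD/psd_cst.
rewrite (eq_qform _ (fun i j => expR m * expR (k i j))) => [|i j].
  by rewrite qformZ expk0 mulr0.
by rewrite addrC expRD.
Qed.

End ExponentialKernels.

Section Schoenberg.
Context {R : realType} {I : finType}.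
Variable phi : I -> I -> R.
Hypotheses (phiC : commutative phi) (phi_diag : forall i, phi i i = 0)
  (phi_cnd : cnd phi).

(* Twice the Gromov product based at [i0]; for a squared Euclidean distance it
   is [2 <x_i - x_i0, x_j - x_i0>]. *)
Let gromov (i0 i j : I) := phi i i0 + phi j i0 - phi i j.

Let gromovC i0 : commutative (gromov i0).
Proof. by move=> i j; rewrite /gromov (phiC i j); ring. Qed.

Let psd_gromov i0 : psd (gromov i0).
Proof.
move=> c; set S := \sum_i c i.
have delta1 : \sum_i delta i0 i = 1 :> R.
  rewrite -[RHS](sum_delta i0 (fun=> 1)).
  by apply: eq_bigr => i _; rewrite mulr1.
have := phi_cnd (fun i => c i + - S * delta i0 i).
rewrite big_split /= -mulr_sumr delta1 mulr1 subrr => /(_ erefl).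
rewrite qform_lin // qform_delta phi_diag mulr0 addr0 bform_delta.
have -> : qform (gromov i0) c = qform (fun i j => phi i i0 + phi j i0) c - qform phi c.
  by rewrite -mulN1r -qformZ -qformD; apply: eq_qform => i j; rewrite /gromov; ring.
rewrite qform_sepD -/S; lra.
Qed.

Let expN_gromov i0 i j :
  expR (- phi i j) = expR (- phi i i0) * expR (- phi j i0) * expR (gromov i0 i j).
Proof. by rewrite -!expRD /gromov; congr expR; ring. Qed.

Lemma psd_expN : psd (fun i j => expR (- phi i j)).
Proof.
move=> c; have [i0 _|I0] := pickP (@predT I); last first.
  by rewrite /qform /bform big1 // => i; have := I0 i.
rewrite (eq_qform (fun i j => expR (- phi i j)) _ c (expN_gromov i0)) qform_conj.
exact/psd_expR/psd_gromov.
Qed.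

Lemma qform_expN_eq0 c : (forall i j, i != j -> 0 < phi i j) ->
  qform (fun i j => expR (- phi i j)) c = 0 -> forall i, c i = 0.
Proof.
move=> phi_gt0 expphi0 i0.
have gromov_dom i j : i != j -> 2 * gromov i0 i j < gromov i0 i i + gromov i0 j j.
  by move=> /phi_gt0; rewrite /gromov !phi_diag; lra.
move: expphi0; rewrite (eq_qform (fun i j => expR (- phi i j)) _ c (expN_gromov i0)).
rewrite qform_conj => /(qform_expR_eq0 _ _ (gromovC i0) (psd_gromov i0) gromov_dom).
by move=> /(_ i0); rewrite phi_diag oppr0 expR0 mulr1.
Qed.

End Schoenberg.

Section SquareRootBounds.
Context {R : realType}.

(* Picard iteration for the fixed point r = (z + r ^+ 2) / 2, whose least
   solution is 1 - sqrt (1 - z); each iterate is a polynomial in z with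
   nonnegative coefficients. *)
Fixpoint sqrt_iter (n : nat) (z : R) : R :=
  if n is n'.+1 then (z + sqrt_iter n' z ^+ 2) / 2 else 0.

Lemma sqrt_iter_bounds n z : 0 <= z <= 1 ->
  0 <= sqrt_iter n z <= 1 - Num.sqrt (1 - z) /\
  1 - Num.sqrt (1 - z) - sqrt_iter n z <= (1 - Num.sqrt (1 - z)) ^+ n.+1.
Proof.
case/andP => z_ge0 z_le1.
have s_ge0 : 0 <= Num.sqrt (1 - z) := sqrtr_ge0 _.
have s2 : Num.sqrt (1 - z) ^+ 2 = 1 - z by rewrite sqr_sqrtr // subr_ge0.
have s_le1 : Num.sqrt (1 - z) <= 1 by rewrite -[leRHS]sqrtr1 ler_wsqrtr //; lra.
set r := 1 - Num.sqrt (1 - z).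
have r_ge0 : 0 <= r by rewrite /r subr_ge0.
have r_fix : r = (z + r ^+ 2) / 2.
  rewrite /r; move: s2; set s := Num.sqrt (1 - z) => s2.
  by rewrite sqrrB s2; field.
elim: n => [|n [/andP [q_ge0 q_le_r] err]] /=; first by rewrite lexx r_ge0 subr0 expr1.
set q := sqrt_iter n z in q_ge0 q_le_r err *.
have q2_le : q ^+ 2 <= r ^+ 2 by rewrite !expr2; apply: ler_pM.
split.
  by rewrite divr_ge0 ?addr_ge0 ?sqr_ge0 //= [leRHS]r_fix ler_pM2r // lerD2l.
have -> : r - (z + q ^+ 2) / 2 = (r - q) * (r + q) / 2 by rewrite [in LHS]r_fix; field.
have r_le1 : r <= 1 by rewrite /r; lra.
have : (r - q) * (r + q) / 2 <= (r - q) * r.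
  by rewrite ler_pdivrMr // -mulrA ler_wpM2l ?subr_ge0 //; lra.
by move/le_trans; apply; rewrite exprSr ler_wpM2r.
Qed.

Lemma sqrt_sub_expR_bounds (x : R) : 0 <= x ->
  0 <= Num.sqrt x - Num.sqrt (1 - expR (- x)) <= x.
Proof.
move=> x_ge0; set e := expR (- x).
have e_gt0 : 0 < e := expR_gt0 _.
have e_ge : 1 - x <= e by have := expR_ge1Dx (- x); rewrite /e; lra.
have e_le : e * (1 + x) <= 1.
  have ex : e * expR x = 1 by rewrite /e -expRD addNr expR0.
  by rewrite -[leRHS]ex ler_wpM2l ?(ltW e_gt0) //; exact: expR_ge1Dx.
set y := 1 - e; have y_ge0 : 0 <= y by rewrite /y subr_ge0 expR_le1 oppr_le0.
set A := Num.sqrt x; set B := Num.sqrt y.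
have A_ge0 : 0 <= A := sqrtr_ge0 _; have B_ge0 : 0 <= B := sqrtr_ge0 _.
have A2 : A ^+ 2 = x by rewrite sqr_sqrtr.
have B2 : B ^+ 2 = y by rewrite sqr_sqrtr.
have y_le_x : y <= x by rewrite /y; lra.
have x_sub_y : x - y <= x ^+ 2.
  (* (1 + x) * (1 - x + x ^+ 2) = 1 + x ^+ 3 *)
  have e_cubic : 0 <= (1 - e * (1 + x)) * (1 - x + x ^+ 2).
    by rewrite mulr_ge0 ?subr_ge0 //; have := sqr_ge0 (x - 1 / 2); nra.
  have ex3_ge0 : 0 <= e * x ^+ 3 by rewrite mulr_ge0 ?exprn_ge0 // ltW.
  by rewrite /y; nra.
have B_le_A : B <= A by nra.
by apply/andP; split; [lra | nra].
Qed.

End SquareRootBounds.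

Section SquareRootCnd.
Context {R : realType} {I : finType}.
Implicit Types (k phi : I -> I -> R) (c : I -> R).

Lemma psd_sqrt_iter k n : commutative k -> psd k ->
  psd (fun i j => sqrt_iter n (k i j)).
Proof.
move=> kC kpsd; elim: n => [|n IHn] /=; first exact: psd_cst.
apply: (eq_psd (fun i j => 2^-1 * (k i j + sqrt_iter n (k i j) * sqrt_iter n (k i j)))).
  by move=> i j; rewrite mulrC expr2.
apply: psdZ; first by rewrite invr_ge0.
by apply: psdD => //; apply: psdM => // i j; rewrite kC.
Qed.

(* The iterates approximate [r] from below, with an error of at most
   [r i j ^+ n.+1]; this error vanishes off the diagonal, and on the diagonal
   it only contributes nonnegative terms. *)
Lemma psd_one_sub_sqrt k : commutative k -> psd k ->
  (forall i j, 0 <= k i j <= 1) -> (forall i j, i != j -> k i j < 1) ->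
  psd (fun i j => 1 - Num.sqrt (1 - k i j)).
Proof.
move=> kC kpsd k01 k_lt1 c; pose r i j := 1 - Num.sqrt (1 - k i j).
pose err n i j := (i != j)%:R * r i j ^+ n.+1.
have r_bound n : - qform (err n) (fun i => `|c i|) <= qform r c.
  pose it i j := sqrt_iter n (k i j).
  rewrite [qform r c](eq_qform _ (fun i j => it i j + (r i j - it i j)));
    last by move=> i j; rewrite addrC subrK.
  rewrite qformD ler_wpDl ?psd_sqrt_iter // /qform /bform -sumrN.
  apply: ler_sum => i _; rewrite -sumrN; apply: ler_sum => j _.
  have [/andP [_ it_le_r] it_err] := sqrt_iter_bounds n _ (k01 i j).
  rewrite -/(r i j) in it_le_r it_err; rewrite /err.
  have [ij|_] /= := eqVneq i j.
    rewrite mul0r mulr0 oppr0 -ij in it_le_r *.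
    by rewrite mulr_ge0 ?subr_ge0 // -expr2 sqr_ge0.
  rewrite mul1r lerNl -normrM; apply: le_trans (ler_norm _) _.
  by rewrite normrN (normrM (c i * c j)) ler_wpM2l // ger0_norm // subr_ge0.
have err_cvg : qform (err n) (fun i => `|c i|) @[n --> \oo] -->
    qform (fun _ _ => 0) (fun i => `|c i|).
  apply: cvg_qform => i j; rewrite /err; case: eqVneq => [_|ij] /=.
    by under eq_cvg do rewrite mul0r; exact: cvg_cst.
  rewrite -(mulr0 (r i j)); under eq_cvg do rewrite mul1r exprS.
  apply: cvgM; first exact: cvg_cst.
  apply: cvg_expr; have [/andP [_ r_ge0] _] := sqrt_iter_bounds 0 _ (k01 i j).
  rewrite ger0_norm // ltrBlDr ltrDl sqrtr_gt0 subr_gt0; exact: k_lt1.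
have : - qform (fun _ _ => 0) (fun i => `|c i|) <= qform r c.
  by apply: cvgr_to_le (cvgN err_cvg) _; exact: nearW.
by rewrite qform_cst mul0r oppr0.
Qed.

Lemma cnd_sqrt_one_sub_expN phi s : commutative phi -> (forall i, phi i i = 0) ->
  (forall i j, i != j -> 0 < phi i j) -> cnd phi -> 0 < s ->
  cnd (fun i j => Num.sqrt (1 - expR (- (s * phi i j)))).
Proof.
move=> phiC phi_diag phi_gt0 phi_cnd s_gt0 c c_sum0.
pose Z i j := expR (- (s * phi i j)).
have Z_psd : psd Z.
  apply: psd_expN => [i j|i|c' /phi_cnd]; first by rewrite phiC.
    by rewrite phi_diag mulr0.
  by rewrite qformZ; apply: mulr_ge0_le0; rewrite ltW.
have phi_ge0 i j : 0 <= phi i j.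
  by have [<-|/phi_gt0/ltW //] := eqVneq i j; rewrite phi_diag.
have Z01 i j : 0 <= Z i j <= 1.
  by rewrite (ltW (expR_gt0 _)) expR_le1 oppr_le0 mulr_ge0 ?(ltW s_gt0).
have Z_lt1 i j : i != j -> Z i j < 1.
  by move=> /phi_gt0 ?; rewrite expR_lt1 oppr_lt0 mulr_gt0.
rewrite (eq_qform _ (fun i j => 1 + -1 * (1 - Num.sqrt (1 - Z i j)))) => [|i j].
  rewrite qformD qform_cst c_sum0 expr0n mulr0 add0r qformZ mulN1r oppr_le0.
  by apply: psd_one_sub_sqrt => // i j; rewrite /Z phiC.
by ring.
Qed.

(* For small [d], [d * sqrt phi] is within [d ^+ 2 * phi] of the kernel
   [sqrt (1 - exp (- d ^+ 2 * phi))]. *)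
Lemma cnd_sqrt phi : commutative phi -> (forall i, phi i i = 0) ->
  (forall i j, i != j -> 0 < phi i j) -> cnd phi ->
  cnd (fun i j => Num.sqrt (phi i j)).
Proof.
move=> phiC phi_diag phi_gt0 phi_cnd c c_sum0.
have phi_ge0 i j : 0 <= phi i j.
  by have [<-|/phi_gt0/ltW //] := eqVneq i j; rewrite phi_diag.
set Q := qform _ c; set C := qform phi (fun i => `|c i|).
have C_ge0 : 0 <= C.
  by apply: sumr_ge0 => i _; apply: sumr_ge0 => j _; rewrite !mulr_ge0.
have Q_le d : 0 < d -> Q <= d * C.
  move=> d_gt0; pose S i j := Num.sqrt (1 - expR (- (d ^+ 2 * phi i j))).
  have S_cnd : qform S c <= 0.
    by apply: cnd_sqrt_one_sub_expN; rewrite ?exprn_gt0.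
  have err_le : qform (fun i j => d * Num.sqrt (phi i j) - S i j) c <= d ^+ 2 * C.
    rewrite /C -qformZ; apply: ler_sum => i _; apply: ler_sum => j _.
    have := sqrt_sub_expR_bounds _ (mulr_ge0 (sqr_ge0 d) (phi_ge0 i j)).
    rewrite sqrtrM ?sqr_ge0 // sqrtr_sqr gtr0_norm // => /andP [err_ge0 err_le].
    apply: le_trans (ler_norm _) _.
    by rewrite !normrM ler_wpM2l ?mulr_ge0 // ger0_norm.
  have : d * Q <= d * (d * C).
    rewrite mulrA -expr2 /Q -qformZ.
    rewrite (eq_qform _ (fun i j => S i j + (d * Num.sqrt (phi i j) - S i j)));
      last by move=> i j; ring.
    by rewrite qformD; lra.
  by rewrite ler_pM2l.
apply/ler_addgt0Pr => e e_gt0; rewrite add0r.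
have C1_gt0 : 0 < C + 1 by rewrite ltr_wpDl.
apply: le_trans (Q_le _ (divr_gt0 e_gt0 C1_gt0)) _.
by rewrite mulrAC ler_pdivrMr // ler_wpM2l ?(ltW e_gt0) // lerDl.
Qed.

End SquareRootCnd.

Section LaplaceKernel.
Context {R : realType} {D : nat}.
Implicit Types (x y : pt R D) (t : R).

Definition sqdist x y := \sum_(q < D) ((x - y) 0 q) ^+ 2.

Definition laplace t x y := expR (- (t * Defs.edist x y)).

Lemma sqdistC x y : sqdist x y = sqdist y x.
Proof. by apply: eq_bigr => q _; rewrite !mxE -sqrrN opprB. Qed.

Lemma sqdistxx x : sqdist x x = 0.
Proof. by rewrite /sqdist big1 // => q _; rewrite subrr mxE expr0n. Qed.

Lemma sqdist_gt0 x y : x != y -> 0 < sqdist x y.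
Proof.
move=> xy; rewrite lt_def sumr_ge0 ?andbT // => [|q _]; last exact: sqr_ge0.
apply: contra xy => /eqP /psumr_eq0P xy0; rewrite -subr_eq0; apply/eqP/rowP => q.
by rewrite [RHS]mxE; apply/eqP; rewrite -sqrf_eq0 xy0 // => q' _; exact: sqr_ge0.
Qed.

Lemma cnd_sqdist {I : finType} (a : I -> pt R D) : cnd (fun i j => sqdist (a i) (a j)).
Proof.
move=> c c_sum0; rewrite qform_sum; apply: sumr_le0 => q _.
pose u i := a i 0 q.
rewrite (eq_qform _ (fun i j => (u i ^+ 2 + u j ^+ 2) + -2 * (u i * u j))).
  rewrite qformD qformZ qform_sepD qform_rank1 c_sum0 mulr0 mul0r add0r.
  by have := sqr_ge0 (\sum_i c i * u i); lra.
by move=> i j; rewrite /u !mxE; ring.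
Qed.

Lemma qform_laplace_eq0 {I : finType} (a : I -> pt R D) t c : injective a -> 0 < t ->
  qform (fun i j => laplace t (a i) (a j)) c = 0 -> forall i, c i = 0.
Proof.
move=> a_inj t_gt0; pose phi i j := sqdist (a i) (a j).
have phiC : commutative phi by move=> i j; rewrite /phi sqdistC.
have phi_diag i : phi i i = 0 by rewrite /phi sqdistxx.
have phi_gt0 i j : i != j -> 0 < phi i j by move=> ij; rewrite sqdist_gt0 ?inj_eq.
have sqrt_cnd := cnd_sqrt _ phiC phi_diag phi_gt0 (cnd_sqdist a).
apply: (@qform_expN_eq0 _ _ (fun i j => t * Num.sqrt (phi i j))).
- by move=> i j; rewrite phiC.
- by move=> i; rewrite phi_diag sqrtr0 mulr0.
- by move=> c' /sqrt_cnd; rewrite qformZ; apply: mulr_ge0_le0; exact: ltW.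
- by move=> i j /phi_gt0 ?; rewrite mulr_gt0 ?sqrtr_gt0.
Qed.

End LaplaceKernel.

Definition is_weighting {R : realType} {T : choiceType} (k : T -> T -> R)
    (A : {fset T}) (w : T -> R) :=
  {in A, forall x, \sum_(y <- A) k x y * w y = 1}.

Section Weightings.
Context {R : realType} {T : choiceType} {k : T -> T -> R}.
Local Open Scope fset_scope.
Hypotheses (kC : commutative k)
  (k_definite : forall (A : {fset T}) (c : T -> R),
     \sum_(x <- A) \sum_(y <- A) c x * c y * k x y = 0 -> {in A, forall x, c x = 0}).
Implicit Types (A X Z : {fset T}) (u v w : T -> R).

Lemma is_weighting_unique {A u v} :
  is_weighting k A u -> is_weighting k A v -> {in A, u =1 v}.
Proof.
move=> uA vA; pose d x := u x - v x.
have kd0 x : x \in A -> \sum_(y <- A) k x y * d y = 0.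
  move=> xA; rewrite (eq_bigr (fun y => k x y * u y - k x y * v y)) => [|y _].
    by rewrite sumrB uA // vA // subrr.
  by rewrite mulrBr.
have d0 : {in A, forall x, d x = 0}.
  apply: k_definite; rewrite big1_seq // => x /andP [_ xA].
  transitivity (d x * \sum_(y <- A) k x y * d y); last by rewrite kd0 ?mulr0.
  by rewrite mulr_sumr; apply: eq_bigr => y _; ring.
by move=> x /d0 /eqP; rewrite subr_eq0 => /eqP.
Qed.

Lemma is_weighting_sub {X Z w} : X `<=` Z -> is_weighting k Z w ->
  {in Z, forall x, x \notin X -> w x = 0} -> is_weighting k X w.
Proof.
move=> XZ wZ w0 x xX; rewrite (big_fset_incl _ XZ) ?wZ ?(fsubsetP XZ) //.
by move=> y yZ /(w0 y yZ) ->; rewrite mulr0.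
Qed.

Lemma sum_weighting_sub {X Z wX wZ} : X `<=` Z -> is_weighting k X wX ->
  is_weighting k Z wZ -> {in Z, forall x, x \notin X -> wZ x = 0} ->
  \sum_(x <- Z) wZ x = \sum_(x <- X) wX x.
Proof.
move=> XZ wXX wZZ wZ0; rewrite -(big_fset_incl _ XZ wZ0).
apply: eq_big_seq => x xX; apply: is_weighting_unique xX => //.
exact: is_weighting_sub wZZ wZ0.
Qed.

(* The energy of [wX - wZ] on [Z] is [\sum_Z wZ - \sum_X wX], because [wX]
   vanishes off [X] and [k wX = 1] on [X]. *)
Lemma weighting_eq_of_sum {X Z wX wZ} : X `<=` Z -> is_weighting k X wX ->
  is_weighting k Z wZ -> {in Z, forall x, x \notin X -> wX x = 0} ->
  \sum_(x <- Z) wZ x = \sum_(x <- X) wX x -> {in Z, wX =1 wZ}.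
Proof.
move=> XZ wXX wZZ wX0 sum_eq; pose d x := wX x - wZ x.
pose r x := \sum_(y <- Z) k x y * wX y - 1.
have kdE x : x \in Z -> \sum_(y <- Z) k x y * d y = r x.
  move=> xZ; rewrite (eq_bigr (fun y => k x y * wX y - k x y * wZ y)) => [|y _].
    by rewrite sumrB wZZ.
  by rewrite mulrBr.
have r0 x : x \in X -> r x = 0.
  move=> xX; rewrite /r -(big_fset_incl _ XZ) ?wXX ?subrr // => y yZ /(wX0 _ yZ) ->.
  by rewrite mulr0.
have wX_r : \sum_(x <- Z) wX x * r x = 0.
  rewrite -(big_fset_incl _ XZ) => [|x xZ /(wX0 _ xZ) ->]; last by rewrite mul0r.
  by rewrite big1_seq // => x /andP [_ /r0 ->]; rewrite mulr0.
have wZ_r : \sum_(x <- Z) wZ x * r x = 0.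
  rewrite (eq_bigr (fun x => \sum_(y <- Z) wZ x * k x y * wX y - wZ x)) => [|x _].
    rewrite sumrB exchange_big /= (eq_big_seq wX) => [|y yZ].
      rewrite -(big_fset_incl _ XZ) => [|x xZ /(wX0 _ xZ) //].
      by rewrite sum_eq subrr.
    rewrite -[RHS]mulr1 -(wZZ y yZ) mulr_sumr; apply: eq_bigr => x _.
    by rewrite kC; ring.
  rewrite /r mulrBr mulr1 mulr_sumr; congr (_ - _).
  by apply: eq_bigr => y _; rewrite mulrA.
have d0 : {in Z, forall x, d x = 0}.
  apply: k_definite; transitivity (\sum_(x <- Z) d x * r x).
    rewrite big_seq_cond [RHS]big_seq_cond; apply: eq_bigr => x /andP [xZ _].
    by rewrite -kdE // mulr_sumr; apply: eq_bigr => y _; ring.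
  rewrite (eq_bigr (fun x => wX x * r x - wZ x * r x)) => [|x _].
    by rewrite sumrB wX_r wZ_r subrr.
  by rewrite mulrBl.
by move=> x /d0 /eqP; rewrite subr_eq0 => /eqP.
Qed.

End Weightings.

Section MagnitudeWeights.
Context {R : realType} {D : nat}.
Local Open Scope fset_scope.
Implicit Types (t : R) (A X Z : {fset pt R D}).

Lemma laplaceC t : commutative (@laplace R D t).
Proof. by move=> x y; rewrite /laplace /Defs.edist /enorm -/(sqdist x y) sqdistC. Qed.

Lemma laplace_definite t A (c : pt R D -> R) : 0 < t ->
  \sum_(x <- A) \sum_(y <- A) c x * c y * laplace t x y = 0 ->
  {in A, forall x, c x = 0}.
Proof.
move=> t_gt0 csum0 x xA.
suff /(_ [` xA]) : forall a : A, c (val a) = 0 by [].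
apply: (qform_laplace_eq0 val t _ val_inj t_gt0).
rewrite -csum0 big_seq_fsetE /=; apply: eq_bigr => a _.
by rewrite big_seq_fsetE.
Qed.

Lemma sum_enum_fset A (F : pt R D -> R) :
  \sum_(i < #|{: A}|) F (val (enum_val i)) = \sum_(x <- A) F x.
Proof.
rewrite big_seq_fsetE /= (reindex enum_rank) /=; last exact/onW_bij/enum_rank_bij.
by apply: eq_bigr => a _; rewrite enum_rankK.
Qed.

Lemma zeta_unit t A : 0 < t -> zeta t A \in unitmx.
Proof.
move=> t_gt0; rewrite -row_free_unit -kermx_eq0; apply/rowV0P => v /sub_kermxP vK.
have vK0 j : \sum_i v 0 i * zeta t A i j = 0.
  by have /rowP/(_ j) := vK; rewrite !mxE.
apply/rowP => i; rewrite mxE.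
apply: (qform_laplace_eq0 (fun i => val (enum_val i)) t _ _ t_gt0).
  by move=> i1 i2 /val_inj/enum_val_inj.
rewrite /qform /bform exchange_big big1 //= => j _.
transitivity (v 0 j * \sum_i v 0 i * zeta t A i j); last by rewrite vK0 mulr0.
by rewrite mulr_sumr; apply: eq_bigr => k _; rewrite mxE /laplace; ring.
Qed.

Lemma weight_enum_val t A i : weight t A (val (enum_val i)) = weighting t A i 0.
Proof. by rewrite /weight valK enum_valK. Qed.

Lemma weight_notin t A x : x \notin A -> weight t A x = 0.
Proof. by move=> xA; rewrite /weight insubN. Qed.

Lemma Mag_sum_weight t A : Mag t A = \sum_(x <- A) weight t A x.
Proof. by rewrite -sum_enum_fset; apply: eq_bigr => i _; rewrite weight_enum_val. Qed.

Lemma weight_is_weighting t A : 0 < t -> is_weighting (laplace t) A (weight t A).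
Proof.
move=> t_gt0 x xA; have := mulKVmx (zeta_unit t A t_gt0) (const_mx 1 : 'cV_#|{: A}|).
move=> /matrixP /(_ (enum_rank [` xA]) 0); rewrite mxE [RHS]mxE => <-.
rewrite -sum_enum_fset; apply: eq_bigr => j _.
by rewrite weight_enum_val [zeta _ _ _ _]mxE enum_rankK.
Qed.

Lemma mag_equiv_weight_notin t X Z : mag_equiv t X Z ->
  {in Z, forall x, x \notin X -> weight t Z x = 0}.
Proof.
move=> eqXZ x xZ xX; apply/eqP/negPn/negP => wx.
have : x \in wsupport t Z by rewrite !inE xZ wx.
by rewrite -eqXZ !inE (negbTE xX).
Qed.

Lemma mag_equiv_weight_eq t X Z : X `<=` Z ->
  {in Z, weight t X =1 weight t Z} -> mag_equiv t X Z.
Proof.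
move=> XZ wXZ; apply/fsetP => x; rewrite !inE /=.
have [xZ|xZ] := boolP (x \in Z); last by rewrite (contraNF (fsubsetP XZ x) xZ).
rewrite -wXZ //; case: (boolP (x \in X)) => //= xX.
by rewrite weight_notin ?eqxx.
Qed.

End MagnitudeWeights.

Local Open Scope fset_scope.

Theorem lemmaB4 (R : realType) (D : nat) (t : R) (X Z : {fset pt R D}) :
  0 < t -> X `<=` Z ->
  (Mag t Z = Mag t X <-> mag_equiv t X Z).
Proof.
move=> t_gt0 XZ; have kC := @laplaceC R D t.
have k_definite A c := @laplace_definite R D t A c t_gt0.
have wX := weight_is_weighting t X t_gt0; have wZ := weight_is_weighting t Z t_gt0.
rewrite !Mag_sum_weight; split => [sum_eq|eqXZ].
  apply: mag_equiv_weight_eq => //.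
  apply: (weighting_eq_of_sum kC k_definite XZ wX wZ _ sum_eq).
  by move=> x _; exact: weight_notin.
apply: (sum_weighting_sub k_definite XZ wX wZ).
exact: mag_equiv_weight_notin.
Qed.
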